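(* (Postponement of parallel $\bot$-reduction.) For all $s,t\in\Lambda^\infty$: if $s\to^\infty_{\beta\bot}t$ then there exists $r\in\Lambda^\infty$ such that $s\to^\infty_\beta r$ and $r\Rightarrow_\bot t$.
   Context: Fix an infinite set $V$ of variables and a set $C$ of constants with $V\cap C=\emptyset$, containing a distinguished constant $\bot$. $\Lambda^\infty$ is the set of infinitary lambda-terms: all finite and infinite terms generated coinductively by $t ::= c \mid x \mid t\,t \mid \lambda x.t$, identified up to $\alpha$-equivalence (fresh variables are assumed always available). $s[t/x]$ is capture-avoiding substitution, $\equiv$ identity of terms, an atom is a variable or constant. For $R\subseteq\Lambda^\infty\times\Lambda^\infty$, the compatible closure $\to_R$ is the least relation with: $(s,t)\in R\Rightarrow s\to_R t$; $s\to_R s'\Rightarrow st\to_R s't,\ ts\to_R ts',\ \lambda x.s\to_R\lambda x.s'$. $R_\beta=\{((\lambda x.s)t, s[t/x])\}$, $\to_\beta$ its compatible closure, $\to^*_\beta$ its reflexive-transitive closure. A term is in head normal form (hnf) if it is $\lambda x_1\ldots x_m.\,a\,t_1\ldots t_n$ ($m,n\ge0$, $a$ an atom, $a\not\equiv\bot$); $t$ has a hnf if $t\to^*_\beta t'$ with $t'$ in hnf. $R_\bot=\{(t,\bot)\mid t\text{ has no hnf}, t\not\equiv\bot\}$; $\to_{\beta\bot}$ is the compatible closure of $R_\beta\cup R_\bot$. The infinitary closure $\to^\infty$ of a relation $\to$ (with reflexive-transitive closure $\to^*$) is the greatest relation such that whenever $s\to^\infty t$: $t\equiv a$ atom and $s\to^*a$;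 or $t\equiv t_1't_2'$, $s\to^*t_1t_2$, $t_i\to^\infty t_i'$; or $t\equiv\lambda x.r'$, $s\to^*\lambda x.r$, $r\to^\infty r'$. $\to^\infty_\beta$ and $\to^\infty_{\beta\bot}$ are the infinitary closures of $\to_\beta$ and $\to_{\beta\bot}$. Parallel $\bot$-reduction $\Rightarrow_\bot$ is the greatest relation such that whenever $s\Rightarrow_\bot t$, one of: $(s,t)\in R_\bot$; $s\equiv t\equiv a$ an atom; $s\equiv s_1s_2$, $t\equiv t_1t_2$ with $s_i\Rightarrow_\bot t_i$ ($i=1,2$); $s\equiv\lambda x.s'$, $t\equiv\lambda x.t'$ with $s'\Rightarrow_\bot t'$. *)

(* Infinitary lambda-terms with de Bruijn indices
   (alpha-equivalence is built in), over an arbitrary type C of constants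
   with a distinguished constant [bot]. *)
Set Implicit Arguments.

Section Terms.
Variable C : Type.

CoInductive term : Type :=
| Var : nat -> term
| Con : C -> term
| App : term -> term -> term
| Lam : term -> term.

(* identity of (infinite) terms = bisimilarity *)
CoInductive term_eq : term -> term -> Prop :=
| eq_var n : term_eq (Var n) (Var n)
| eq_con c : term_eq (Con c) (Con c)
| eq_app s1 s2 t1 t2 : term_eq s1 t1 -> term_eq s2 t2 -> term_eq (App s1 s2) (App t1 t2)
| eq_lam s t : term_eq s t -> term_eq (Lam s) (Lam t).

CoFixpoint ren (xi : nat -> nat) (t : term) : term :=
  match t with
  | Var n => Var (xi n)
  | Con c => Con c
  | App a b => App (ren xi a) (ren xi b)
  | Lam a => Lam (ren (fun n => match n with 0 => 0 | S k => S (xi k) end) a)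
  end.

Definition up (sigma : nat -> term) : nat -> term :=
  fun n => match n with 0 => Var 0 | S k => ren S (sigma k) end.

CoFixpoint subst (sigma : nat -> term) (t : term) : term :=
  match t with
  | Var n => sigma n
  | Con c => Con c
  | App a b => App (subst sigma a) (subst sigma b)
  | Lam a => Lam (subst (up sigma) a)
  end.

(* s[t/x] where s is the body of  \x. s  (x = de Bruijn index 0) *)
Definition subst0 (s t : term) : term :=
  subst (fun n => match n with 0 => t | S k => Var k end) s.

Inductive compat (R : term -> term -> Prop) : term -> term -> Prop :=
| c_base s t : R s t -> compat R s t
| c_appl s s' t : compat R s s' -> compat R (App s t) (App s' t)
| c_appr s s' t : compat R s s' -> compat R (App t s) (App t s')
| c_lam s s' : compat R s s' -> compat R (Lam s) (Lam s').

Inductive star (R : term -> term -> Prop) : term -> term -> Prop :=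
| star_refl s : star R s s
| star_step s t u : R s t -> star R t u -> star R s u.

Inductive R_beta : term -> term -> Prop :=
| rbeta s t : R_beta (App (Lam s) t) (subst0 s t).

Definition beta_step := compat R_beta.

Variable bot : C.

Inductive hnf_body : term -> Prop :=
| hb_var n : hnf_body (Var n)
| hb_con c : c <> bot -> hnf_body (Con c)
| hb_app s u : hnf_body s -> hnf_body (App s u).

Inductive is_hnf : term -> Prop :=
| hnf_b t : hnf_body t -> is_hnf t
| hnf_lam t : is_hnf t -> is_hnf (Lam t).

Definition has_hnf (t : term) : Prop :=
  exists t', star beta_step t t' /\ is_hnf t'.

Definition R_bot (s t : term) : Prop :=
  t = Con bot /\ ~ has_hnf s /\ s <> Con bot.

Definition beta_bot_step := compat (fun s t => R_beta s t \/ R_bot s t).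

CoInductive inf (R : term -> term -> Prop) : term -> term -> Prop :=
| inf_var s n : star R s (Var n) -> inf R s (Var n)
| inf_con s c : star R s (Con c) -> inf R s (Con c)
| inf_app s t1 t2 t1' t2' :
    star R s (App t1 t2) -> inf R t1 t1' -> inf R t2 t2' -> inf R s (App t1' t2')
| inf_lam s r r' : star R s (Lam r) -> inf R r r' -> inf R s (Lam r').

CoInductive par_bot : term -> term -> Prop :=
| pb_bot s t : R_bot s t -> par_bot s t
| pb_var n : par_bot (Var n) (Var n)
| pb_con c : par_bot (Con c) (Con c)
| pb_app s1 s2 t1 t2 : par_bot s1 t1 -> par_bot s2 t2 -> par_bot (App s1 s2) (App t1 t2)
| pb_lam s t : par_bot s t -> par_bot (Lam s) (Lam t).

End Terms.

From Stdlib Require Import Classical ClassicalEpsilon.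

(* A beta-bot step [t -> u] can be pushed through any [r =>bot t] as a finite
   beta reduction [r ->* r'] with [r' =>bot u].  A beta step of [t] is mirrored
   in [r], because [=>bot] is closed under substitution; a bot-step [t -> bot]
   needs no step in [r], because [r] has no head normal form when [t] has none.
   Both rest on two facts about head normal forms: if [u[sigma]] has one then so
   has [u] (standard reduction traces the hnf of [u[sigma]] back to [u]), and
   replacing subterms without hnf by bot-headed terms preserves having one.
   Postponing along the finite prefixes [s ->* t1 t2], [s ->* \x.r] of an
   infinitary reduction, and choosing the witnesses corecursively, builds the
   required [r]. *)

Set Implicit Arguments.
Unset Strict Implicit.

Section Substitution.
Variable C : Type.
Notation T := (term C).

Definition term_frob (t : T) : T :=
  match t with
  | Var _ n => Var C n
  | Con c => Con c
  | App a b => App a b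
  | Lam a => Lam a
  end.

Lemma term_frob_eq (t : T) : t = term_frob t.
Proof. destruct t; reflexivity. Qed.

Definition upren (xi : nat -> nat) : nat -> nat :=
  fun n => match n with 0 => 0 | S k => S (xi k) end.

Lemma ren_var xi n : ren xi (Var C n) = Var C (xi n).
Proof. rewrite (term_frob_eq (ren xi (Var C n))). reflexivity. Qed.
Lemma ren_con xi c : ren xi (Con c) = Con c :> T.
Proof. rewrite (term_frob_eq (ren xi (Con c))). reflexivity. Qed.
Lemma ren_app xi a b : ren xi (App a b) = App (ren xi a) (ren xi b) :> T.
Proof. rewrite (term_frob_eq (ren xi (App a b))). reflexivity. Qed.
Lemma ren_lam xi a : ren xi (Lam a) = Lam (ren (upren xi) a) :> T.
Proof. rewrite (term_frob_eq (ren xi (Lam a))). reflexivity. Qed.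

Lemma subst_var sg n : subst sg (Var C n) = sg n.
Proof. rewrite (term_frob_eq (subst sg (Var C n))). simpl. symmetry. apply term_frob_eq. Qed.
Lemma subst_con sg c : subst sg (Con c) = Con c :> T.
Proof. rewrite (term_frob_eq (subst sg (Con c))). reflexivity. Qed.
Lemma subst_app sg a b : subst sg (App a b) = App (subst sg a) (subst sg b) :> T.
Proof. rewrite (term_frob_eq (subst sg (App a b))). reflexivity. Qed.
Lemma subst_lam sg a : subst sg (Lam a) = Lam (subst (up sg) a) :> T.
Proof. rewrite (term_frob_eq (subst sg (Lam a))). reflexivity. Qed.

Lemma term_eq_refl : forall t : T, term_eq t t.
Proof. cofix CIH. intros [n|c|a b|a]; constructor; apply CIH. Qed.

Lemma term_eq_sym : forall s t : T, term_eq s t -> term_eq t s.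
Proof. cofix CIH. intros s t H; destruct H; constructor; apply CIH; assumption. Qed.

Lemma term_eq_trans : forall s t u : T, term_eq s t -> term_eq t u -> term_eq s u.
Proof.
  cofix CIH. intros s t u H1 H2; destruct H1; inversion H2; subst; constructor; eauto.
Qed.

Lemma term_eq_ren : forall x y : T, term_eq x y -> forall xi, term_eq (ren xi x) (ren xi y).
Proof.
  cofix CIH. intros x y H xi; destruct H.
  - rewrite !ren_var. constructor.
  - rewrite !ren_con. constructor.
  - rewrite !ren_app. constructor; apply CIH; assumption.
  - rewrite !ren_lam. constructor; apply CIH; assumption.
Qed.

Lemma term_eq_subst : forall x y : T, term_eq x y -> forall sg tau,
  (forall n, term_eq (sg n) (tau n)) -> term_eq (subst sg x) (subst tau y).
Proof.
  cofix CIH. intros x y H sg tau Hst; destruct H.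
  - rewrite !subst_var. apply Hst.
  - rewrite !subst_con. constructor.
  - rewrite !subst_app. constructor; apply CIH; assumption.
  - rewrite !subst_lam. constructor; apply CIH; [assumption|].
    intros [|n]; simpl; [apply term_eq_refl | apply term_eq_ren, Hst].
Qed.

Lemma ren_ren : forall (x : T) xi zeta theta, (forall n, xi (zeta n) = theta n) ->
  term_eq (ren xi (ren zeta x)) (ren theta x).
Proof.
  cofix CIH. intros [n|c|a b|a] xi zeta theta H.
  - rewrite !ren_var, H. constructor.
  - rewrite !ren_con. constructor.
  - rewrite !ren_app. constructor; apply CIH; assumption.
  - rewrite !ren_lam. constructor; apply CIH. intros [|k]; simpl; auto.
Qed.

Lemma subst_ren : forall (x : T) sg xi tau, (forall n, term_eq (sg (xi n)) (tau n)) ->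
  term_eq (subst sg (ren xi x)) (subst tau x).
Proof.
  cofix CIH. intros [n|c|a b|a] sg xi tau H.
  - rewrite ren_var, !subst_var. apply H.
  - rewrite ren_con, !subst_con. constructor.
  - rewrite ren_app, !subst_app. constructor; apply CIH; assumption.
  - rewrite ren_lam, !subst_lam. constructor; apply CIH.
    intros [|k]; simpl; [apply term_eq_refl | apply term_eq_ren, H].
Qed.

Lemma ren_subst : forall (x : T) xi sg tau, (forall n, term_eq (ren xi (sg n)) (tau n)) ->
  term_eq (ren xi (subst sg x)) (subst tau x).
Proof.
  cofix CIH. intros [n|c|a b|a] xi sg tau H.
  - rewrite !subst_var. apply H.
  - rewrite !subst_con, ren_con. constructor.
  - rewrite !subst_app, ren_app. constructor; apply CIH; assumption.
  - rewrite !subst_lam, ren_lam. constructor; apply CIH. intros [|k]; simpl.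
    + rewrite ren_var. constructor.
    + eapply term_eq_trans. { apply ren_ren with (theta := fun n => S (xi n)). reflexivity. }
      eapply term_eq_trans. { apply term_eq_sym, ren_ren with (zeta := xi). reflexivity. }
      apply term_eq_ren, H.
Qed.

Lemma subst_subst : forall (x : T) sg tau theta,
  (forall n, term_eq (subst tau (sg n)) (theta n)) ->
  term_eq (subst tau (subst sg x)) (subst theta x).
Proof.
  cofix CIH. intros [n|c|a b|a] sg tau theta H.
  - rewrite !subst_var. apply H.
  - rewrite !subst_con. constructor.
  - rewrite !subst_app. constructor; apply CIH; assumption.
  - rewrite !subst_lam. constructor; apply CIH. intros [|k]; simpl.
    + rewrite subst_var. constructor.
    + eapply term_eq_trans.
      { apply subst_ren with (tau := fun n => ren S (tau n)). intro; apply term_eq_refl. }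
      eapply term_eq_trans. { apply term_eq_sym, ren_subst. intro; apply term_eq_refl. }
      apply term_eq_ren, H.
Qed.

Lemma subst_ids : forall (x : T) sg, (forall n, term_eq (sg n) (Var C n)) ->
  term_eq (subst sg x) x.
Proof.
  cofix CIH. intros [n|c|a b|a] sg H.
  - rewrite !subst_var. apply H.
  - rewrite !subst_con. constructor.
  - rewrite !subst_app. constructor; apply CIH; assumption.
  - rewrite !subst_lam. constructor; apply CIH. intros [|k]; simpl.
    + constructor.
    + rewrite <- (ren_var S k). apply term_eq_ren, H.
Qed.

Lemma ren_as_subst : forall (x : T) xi sg, (forall n, term_eq (sg n) (Var C (xi n))) ->
  term_eq (ren xi x) (subst sg x).
Proof.
  cofix CIH. intros [n|c|a b|a] xi sg H.
  - rewrite ren_var, !subst_var. apply term_eq_sym, H.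
  - rewrite ren_con, !subst_con. constructor.
  - rewrite ren_app, !subst_app. constructor; apply CIH; assumption.
  - rewrite ren_lam, !subst_lam. constructor; apply CIH. intros [|k]; simpl.
    + constructor.
    + rewrite <- (ren_var S (xi k)). apply term_eq_ren, H.
Qed.

Lemma term_eq_subst0 (a a' d d' : T) : term_eq a a' -> term_eq d d' ->
  term_eq (subst0 a d) (subst0 a' d').
Proof.
  intros Ha Hd. apply term_eq_subst; [exact Ha|].
  intros [|k]; [exact Hd | apply term_eq_refl].
Qed.

Lemma subst_subst0 sg (a d : T) :
  term_eq (subst sg (subst0 a d)) (subst0 (subst (up sg) a) (subst sg d)).
Proof.
  unfold subst0.
  eapply term_eq_trans.
  { apply subst_subst with (theta := fun n => match n with 0 => subst sg d | S k => sg k end).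
    intros [|k]; simpl; [apply term_eq_refl | rewrite subst_var; apply term_eq_refl]. }
  apply term_eq_sym, subst_subst. intros [|k]; simpl.
  - rewrite subst_var. apply term_eq_refl.
  - eapply term_eq_trans.
    { apply subst_ren with (tau := fun n => Var C n). intro; apply term_eq_refl. }
    apply subst_ids. intro; apply term_eq_refl.
Qed.

Lemma ren_subst0 xi (a d : T) :
  term_eq (ren xi (subst0 a d)) (subst0 (ren (upren xi) a) (ren xi d)).
Proof.
  unfold subst0.
  eapply term_eq_trans.
  { apply ren_subst with (tau := fun n => match n with 0 => ren xi d | S k => Var C (xi k) end).
    intros [|k]; simpl; [apply term_eq_refl | rewrite ren_var; apply term_eq_refl]. }
  apply term_eq_sym, subst_ren. intros [|k]; apply term_eq_refl.
Qed.

End Substitution.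

Section Reduction.
Variable C : Type.
Notation T := (term C).

Lemma star_trans R : forall s t u : T, star R s t -> star R t u -> star R s u.
Proof. intros s t u H; induction H; intros; [assumption | econstructor; eauto]. Qed.

Lemma star_one R (s t : T) : R s t -> star R s t.
Proof. intros; econstructor; [eassumption | constructor]. Qed.

Lemma star_map R R' (f : T -> T) : (forall s t, R s t -> R' (f s) (f t)) ->
  forall s t, star R s t -> star R' (f s) (f t).
Proof. intros Hf s t H; induction H; econstructor; eauto. Qed.

Lemma star_beta_appl (a a' b : T) : star (@beta_step C) a a' ->
  star (@beta_step C) (App a b) (App a' b).
Proof. apply (star_map (f := fun x => App x b)). intros; apply c_appl; assumption. Qed.

Lemma star_beta_appr (a b b' : T) : star (@beta_step C) b b' ->
  star (@beta_step C) (App a b) (App a b').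
Proof. apply (star_map (f := fun x => App a x)). intros; apply c_appr; assumption. Qed.

Lemma star_beta_lam (a a' : T) : star (@beta_step C) a a' ->
  star (@beta_step C) (Lam a) (Lam a').
Proof. apply (star_map (f := @Lam C)). intros; apply c_lam; assumption. Qed.

Inductive whead : T -> T -> Prop :=
| whead_beta a b : whead (App (Lam a) b) (subst0 a b)
| whead_appl a a' b : whead a a' -> whead (App a b) (App a' b).

Lemma whead_beta_step s t : whead s t -> beta_step s t.
Proof. induction 1; [apply c_base; constructor | apply c_appl; assumption]. Qed.

Lemma star_whead_beta s t : star whead s t -> star (@beta_step C) s t.
Proof. apply (star_map (f := id)). apply whead_beta_step. Qed.

Lemma star_whead_appl (a a' b : T) : star whead a a' -> star whead (App a b) (App a' b).
Proof. apply (star_map (f := fun x => App x b)). intros; apply whead_appl; assumption. Qed.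

Lemma inf_refl R : forall t : T, inf R t t.
Proof.
  cofix CIH. intros [n|c|a b|a].
  - apply inf_var; constructor.
  - apply inf_con; constructor.
  - eapply inf_app; [constructor | apply CIH | apply CIH].
  - eapply inf_lam; [constructor | apply CIH].
Qed.

Lemma inf_star_l R (s r t : T) : star R s r -> inf R r t -> inf R s t.
Proof.
  intros Hs Ht; destruct Ht; econstructor; eauto using star_trans.
Qed.

Definition term_eq_simulation (R : T -> T -> Prop) : Prop :=
  forall y y', R y y' -> forall x, term_eq x y -> exists x', R x x' /\ term_eq x' y'.

Lemma beta_step_term_eq_simulation : term_eq_simulation (@beta_step C).
Proof.
  intros y y' H; induction H as [y y' []|y y' t _ IH|y y' t _ IH|y y' _ IH]; intros x Hx.
  - inversion Hx as [| |x1 x2 ? ? Hl Hb| ]; subst. inversion Hl; subst.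
    eexists; split; [apply c_base; constructor | apply term_eq_subst0; assumption].
  - inversion Hx as [| |x1 x2 ? ? H1 H2|]; subst. destruct (IH _ H1) as [x' [Hs He]].
    exists (App x' x2); split; [apply c_appl | constructor]; auto.
  - inversion Hx as [| |x1 x2 ? ? H1 H2|]; subst. destruct (IH _ H2) as [x' [Hs He]].
    exists (App x1 x'); split; [apply c_appr | constructor]; auto.
  - inversion Hx as [| | |x1 ? H1]; subst. destruct (IH _ H1) as [x' [Hs He]].
    exists (Lam x'); split; [apply c_lam | constructor]; auto.
Qed.

Lemma whead_term_eq_simulation : term_eq_simulation whead.
Proof.
  intros y y' H; induction H as [a b|a a' b _ IH]; intros x Hx.
  - inversion Hx as [| |x1 x2 ? ? Hl Hb| ]; subst. inversion Hl; subst.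
    eexists; split; [constructor | apply term_eq_subst0; assumption].
  - inversion Hx as [| |x1 x2 ? ? H1 H2|]; subst. destruct (IH _ H1) as [x' [Hs He]].
    exists (App x' x2); split; [apply whead_appl | constructor]; auto.
Qed.

Lemma star_term_eq_simulation R : term_eq_simulation R -> term_eq_simulation (star R).
Proof.
  intros Hs y y' H; induction H as [y|y y1 y' H1 _ IH]; intros x Hx.
  - exists x; split; [constructor | assumption].
  - destruct (Hs _ _ H1 _ Hx) as [x1 [Hx1 He1]]. destruct (IH _ He1) as [x' [Hx' He']].
    exists x'; split; [econstructor; eauto | assumption].
Qed.

Lemma whead_subst sg p p' : whead p p' ->
  exists z, whead (subst sg p) z /\ term_eq z (subst sg p').
Proof.
  intros H; revert sg; induction H as [a b|a a' b _ IH]; intros sg.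
  - rewrite subst_app, subst_lam. eexists; split; [constructor | apply term_eq_sym, subst_subst0].
  - destruct (IH sg) as [z [Hz He]]. rewrite !subst_app.
    exists (App z (subst sg b)); split; [apply whead_appl | constructor]; auto using term_eq_refl.
Qed.

Lemma whead_ren xi p p' : whead p p' ->
  exists z, whead (ren xi p) z /\ term_eq z (ren xi p').
Proof.
  intros H; revert xi; induction H as [a b|a a' b _ IH]; intros xi.
  - rewrite ren_app, ren_lam. eexists; split; [constructor | apply term_eq_sym, ren_subst0].
  - destruct (IH xi) as [z [Hz He]]. rewrite !ren_app.
    exists (App z (ren xi b)); split; [apply whead_appl | constructor]; auto using term_eq_refl.
Qed.

Lemma star_whead_map (f : T -> T) :
  (forall p p', whead p p' -> exists z, whead (f p) z /\ term_eq z (f p')) ->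
  forall p p', star whead p p' -> forall x, term_eq x (f p) ->
  exists z, star whead x z /\ term_eq z (f p').
Proof.
  intros Hf p p' H; induction H as [p|p p1 p' H1 _ IH]; intros x Hx.
  - exists x; split; [constructor | assumption].
  - destruct (Hf _ _ H1) as [z1 [Hz1 He1]].
    destruct (whead_term_eq_simulation Hz1 Hx) as [x1 [Hx1 He]].
    destruct (IH x1 (term_eq_trans He He1)) as [z [Hz Hez]].
    exists z; split; [econstructor; eauto | assumption].
Qed.

End Reduction.

Arguments whead {C}.

Section Standardization.
Variable C : Type.
Notation T := (term C).

CoInductive std : T -> T -> Prop :=
| std_var t n : star whead t (Var C n) -> std t (Var C n)
| std_con t c : star whead t (Con c) -> std t (Con c)
| std_app t a1 a2 b1 b2 :
    star whead t (App a1 a2) -> std a1 b1 -> std a2 b2 -> std t (App b1 b2)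
| std_lam t a b : star whead t (Lam a) -> std a b -> std t (Lam b).

Lemma std_refl : forall t, std t t.
Proof.
  cofix CIH. intros [n|c|a b|a].
  - constructor; constructor.
  - constructor; constructor.
  - econstructor; [constructor | apply CIH | apply CIH].
  - econstructor; [constructor | apply CIH].
Qed.

Lemma std_whead_l t u s : star whead t u -> std u s -> std t s.
Proof. intros H1 H2; destruct H2; econstructor; eauto using star_trans. Qed.

Lemma std_term_eq_l : forall x y s, term_eq x y -> std y s -> std x s.
Proof.
  cofix CIH. intros x y s Hxy H.
  destruct H as [y n H|y c H|y a1 a2 b1 b2 H H1 H2|y a b H H1];
    destruct (star_term_eq_simulation (@whead_term_eq_simulation C) H Hxy) as [x' [Hx' He]];
    inversion He; subst; econstructor; eauto.
Qed.

Lemma std_ren : forall p a, std p a -> forall xi x, term_eq x (ren xi p) -> std x (ren xi a).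
Proof.
  cofix CIH. intros p a H xi x Hx.
  destruct H as [p n H|p c H|p a1 a2 b1 b2 H H1 H2|p a b H H1];
    destruct (star_whead_map (fun p p' Hp => whead_ren xi Hp) H Hx) as [z [Hz He]].
  - rewrite ren_var in *. inversion He; subst. constructor; assumption.
  - rewrite ren_con in *. inversion He; subst. constructor; assumption.
  - rewrite ren_app in *. inversion He; subst. econstructor; eauto.
  - rewrite ren_lam in *. inversion He; subst. econstructor; eauto.
Qed.

Lemma std_subst : forall p a, std p a -> forall sg tau, (forall n, std (sg n) (tau n)) ->
  forall x, term_eq x (subst sg p) -> std x (subst tau a).
Proof.
  cofix CIH. intros p a H sg tau Hs x Hx.
  destruct H as [p n H|p c H|p a1 a2 b1 b2 H H1 H2|p a b H H1];
    destruct (star_whead_map (fun p p' Hp => whead_subst sg Hp) H Hx) as [z [Hz He]].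
  - rewrite subst_var in *. eapply std_whead_l; [eassumption|]. eapply std_term_eq_l; eauto.
  - rewrite subst_con in *. inversion He; subst. constructor; assumption.
  - rewrite subst_app in *. inversion He; subst. econstructor; eauto.
  - rewrite subst_lam in *. inversion He; subst. econstructor; [eassumption|].
    eapply CIH; [eassumption | | eassumption].
    intros [|k]; simpl.
    + constructor; constructor.
    + eapply std_ren; [apply Hs | apply term_eq_refl].
Qed.

Lemma std_whead_r u u' : whead u u' -> forall t, std t u ->
  exists t', star whead t t' /\ std t' u'.
Proof.
  induction 1 as [a b|a a' b _ IH]; intros t Ht.
  - inversion Ht as [| |? a1 a2 ? ? Ht1 Hl Hb|]; subst.
    inversion Hl as [| | |? a0 ? Hl0 Ha]; subst.
    exists (subst0 a0 a2); split.
    + eapply star_trans; [exact Ht1|].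
      eapply star_trans; [apply star_whead_appl; exact Hl0|]. apply star_one. constructor.
    + eapply std_subst; [exact Ha | | apply term_eq_refl].
      intros [|k]; [exact Hb | apply std_refl].
  - inversion Ht as [| |? a1 a2 ? ? Ht1 Ha Hb|]; subst.
    destruct (IH _ Ha) as [t1 [Ht2 Ht3]].
    exists (App t1 a2); split.
    + eapply star_trans; [exact Ht1 | apply star_whead_appl; exact Ht2].
    + econstructor; [constructor | exact Ht3 | exact Hb].
Qed.

Lemma std_star_whead_r u u' : star whead u u' -> forall t, std t u ->
  exists t', star whead t t' /\ std t' u'.
Proof.
  induction 1 as [u|u u1 u' H _ IH]; intros t Ht.
  - exists t; split; [constructor | assumption].
  - destruct (std_whead_r H Ht) as [t1 [H1 H2]]. destruct (IH _ H2) as [t2 [H3 H4]].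
    exists t2; split; [eapply star_trans; eauto | assumption].
Qed.

Lemma std_trans : forall t u s, std t u -> std u s -> std t s.
Proof.
  cofix CIH. intros t u s H1 H2.
  destruct H2 as [u n H|u c H|u a1 a2 b1 b2 H H3 H4|u a b H H3];
    destruct (std_star_whead_r H H1) as [t' [H5 H6]]; inversion H6; subst;
    econstructor; eauto using star_trans.
Qed.

Lemma beta_step_std t u : beta_step t u -> std t u.
Proof.
  induction 1 as [t u []|t t' u _ IH|t t' u _ IH|t t' _ IH].
  - eapply std_whead_l; [apply star_one; constructor | apply std_refl].
  - econstructor; [constructor | exact IH | apply std_refl].
  - econstructor; [constructor | apply std_refl | exact IH].
  - econstructor; [constructor | exact IH].
Qed.

Lemma star_beta_std t u : star (@beta_step C) t u -> std t u.
Proof.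
  induction 1; [apply std_refl | eapply std_trans; eauto using beta_step_std].
Qed.

End Standardization.

Arguments std {C}.

Section HeadNormalForms.
Variable C : Type.
Variable bot : C.
Notation T := (term C).

Lemma hnf_body_term_eq y : hnf_body bot y -> forall x, term_eq x y -> hnf_body bot x.
Proof. induction 1; intros x Hx; inversion Hx; subst; constructor; auto. Qed.

Lemma is_hnf_term_eq y : is_hnf bot y -> forall x, term_eq x y -> is_hnf bot x.
Proof.
  induction 1 as [y Hy|y _ IH]; intros x Hx.
  - constructor. eapply hnf_body_term_eq; eassumption.
  - inversion Hx; subst. apply hnf_lam, IH. assumption.
Qed.

Lemma has_hnf_term_eq x y : has_hnf bot y -> term_eq x y -> has_hnf bot x.
Proof.
  intros [h [Hy Hh]] Hxy.
  destruct (star_term_eq_simulation (@beta_step_term_eq_simulation C) Hy Hxy) as [h' [Hx He]].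
  exists h'; split; [exact Hx | eapply is_hnf_term_eq; eassumption].
Qed.

Inductive var_headed : T -> Prop :=
| vh_var n : var_headed (Var C n)
| vh_app a b : var_headed a -> var_headed (App a b).

Lemma var_headed_hnf_body u : var_headed u -> hnf_body bot u.
Proof. induction 1; constructor; assumption. Qed.

Lemma whead_subst_inv w w' sg u : whead w w' -> term_eq w (subst sg u) ->
  var_headed u \/ exists u', whead u u' /\ term_eq w' (subst sg u').
Proof.
  intros H; revert u; induction H as [a b|a a' b _ IH]; intros u Hu;
    (destruct u as [n|c|u1 u2|u1];
     [left; constructor
     | rewrite subst_con in Hu; inversion Hu
     | rewrite subst_app in Hu; inversion Hu as [| |? ? ? ? Hu1 Hu2|]; subst
     | rewrite subst_lam in Hu; inversion Hu]).
  - destruct u1 as [n|c|v1 v2|v].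
    + left; repeat constructor.
    + rewrite subst_con in Hu1; inversion Hu1.
    + rewrite subst_app in Hu1; inversion Hu1.
    + rewrite subst_lam in Hu1; inversion Hu1; subst.
      right. exists (subst0 v u2). split; [constructor|].
      eapply term_eq_trans; [apply term_eq_subst0; eassumption | apply term_eq_sym, subst_subst0].
  - destruct (IH u1 Hu1) as [Hv|[u' [Hu' He]]].
    + left; constructor; assumption.
    + right. exists (App u' u2). split; [constructor; assumption|].
      rewrite subst_app. constructor; assumption.
Qed.

Lemma star_whead_subst_inv w z sg u : star whead w z -> term_eq w (subst sg u) ->
  (exists v, star (@beta_step C) u v /\ hnf_body bot v) \/
  exists u', star whead u u' /\ term_eq z (subst sg u') /\ forall n, u' <> Var C n.
Proof.
  intros H; revert u; induction H as [w|w w1 z Hw _ IH]; intros u Hu.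
  - destruct u as [n|c|u1 u2|u1].
    + left. exists (Var C n); split; constructor.
    + right. exists (Con c); repeat split; [constructor | assumption | discriminate].
    + right. exists (App u1 u2); repeat split; [constructor | assumption | discriminate].
    + right. exists (Lam u1); repeat split; [constructor | assumption | discriminate].
  - destruct (whead_subst_inv Hw Hu) as [Hv|[u1 [Hu1 He1]]].
    + left. exists u; split; [constructor | apply var_headed_hnf_body; assumption].
    + destruct (IH u1 He1) as [[v [Hv Hvh]]|[u' [Hu' Hrest]]].
      * left. exists v; split; [|assumption].
        eapply star_trans; [apply star_whead_beta, star_one, Hu1 | exact Hv].
      * right. exists u'; split; [econstructor; eassumption | exact Hrest].
Qed.

Lemma std_hnf_body_subst_inv h w sg u : hnf_body bot h ->
  term_eq w (subst sg u) -> std w h ->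
  exists v, star (@beta_step C) u v /\ hnf_body bot v.
Proof.
  intros Hh; revert w u; induction Hh as [n|c Hc|h1 h2 _ IH]; intros w u Hw Hs;
    inversion Hs as [? ? Hz|? ? Hz|? a1 a2 ? ? Hz Ha1 Ha2|]; subst;
    (destruct (star_whead_subst_inv Hz Hw) as [Hv|[u' [Hu' [He Hnv]]]]; [exact Hv|];
     destruct u' as [m|c'|v1 v2|v1];
     [ exfalso; eapply Hnv; reflexivity
     | rewrite subst_con in He | rewrite subst_app in He | rewrite subst_lam in He ];
     inversion He as [|? | ? ? ? ? He1 He2|]; subst).
  - exists (Con c'); split; [apply star_whead_beta; assumption | constructor; assumption].
  - destruct (IH _ _ He1 Ha1) as [v [Hv Hvh]].
    exists (App v v2); split; [|constructor; assumption].
    eapply star_trans; [apply star_whead_beta; eassumption | apply star_beta_appl; exact Hv].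
Qed.

Lemma std_hnf_subst_inv h w sg u : is_hnf bot h ->
  term_eq w (subst sg u) -> std w h -> has_hnf bot u.
Proof.
  intros Hh; revert w sg u; induction Hh as [h Hh|h _ IH]; intros w sg u Hw Hs.
  - destruct (std_hnf_body_subst_inv Hh Hw Hs) as [v [Hv Hvh]].
    exists v; split; [exact Hv | constructor; exact Hvh].
  - inversion Hs as [| | |? a ? Hz Ha]; subst.
    destruct (star_whead_subst_inv Hz Hw) as [[v [Hv Hvh]]|[u' [Hu' [He Hnv]]]].
    + exists v; split; [exact Hv | constructor; exact Hvh].
    + destruct u' as [m|c'|v1 v2|v1];
        [ exfalso; eapply Hnv; reflexivity
        | rewrite subst_con in He | rewrite subst_app in He | rewrite subst_lam in He ];
        inversion He as [| | |? ? He1]; subst.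
      destruct (IH _ _ _ He1 Ha) as [v [Hv Hvh]].
      exists (Lam v); split; [|apply hnf_lam; exact Hvh].
      eapply star_trans; [apply star_whead_beta; eassumption | apply star_beta_lam; exact Hv].
Qed.

Lemma has_hnf_subst_inv sg u : has_hnf bot (subst sg u) -> has_hnf bot u.
Proof.
  intros [h [Hh Hhnf]].
  exact (std_hnf_subst_inv Hhnf (term_eq_refl _) (star_beta_std Hh)).
Qed.

Lemma has_hnf_ren_inv xi u : has_hnf bot (ren xi u) -> has_hnf bot u.
Proof.
  intros H. apply (has_hnf_subst_inv (sg := fun n => Var C (xi n))).
  eapply has_hnf_term_eq; [exact H|].
  apply term_eq_sym, ren_as_subst. intro; apply term_eq_refl.
Qed.

Lemma is_hnf_has_hnf h : is_hnf bot h -> has_hnf bot h.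
Proof. intros Hh; exists h; split; [constructor | exact Hh]. Qed.

Lemma no_hnf_star t t' : ~ has_hnf bot t -> star (@beta_step C) t t' -> ~ has_hnf bot t'.
Proof.
  intros Ht Hs [h [Hh Hhnf]]. apply Ht. exists h; split; [eapply star_trans; eassumption | exact Hhnf].
Qed.

Lemma no_hnf_lam a : ~ has_hnf bot (Lam a) -> ~ has_hnf bot a.
Proof.
  intros Ha [h [Hh Hhnf]]. apply Ha. exists (Lam h); split; [apply star_beta_lam, Hh | apply hnf_lam, Hhnf].
Qed.

End HeadNormalForms.

Section BotHeaded.
Variable C : Type.
Variable bot : C.
Notation T := (term C).

Inductive bot_headed : T -> Prop :=
| bh_bot : bot_headed (Con bot)
| bh_app a b : bot_headed a -> bot_headed (App a b).

Lemma bot_headed_subst sg t : bot_headed t -> bot_headed (subst sg t).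
Proof.
  induction 1; [rewrite subst_con | rewrite subst_app]; constructor; assumption.
Qed.

Lemma bot_headed_ren xi t : bot_headed t -> bot_headed (ren xi t).
Proof.
  induction 1; [rewrite ren_con | rewrite ren_app]; constructor; assumption.
Qed.

(* [par_bot bot] itself is not preserved by simulating beta steps: contracting
   [(\x.a) b] where [\x.a] was replaced by [bot] leaves [bot b] on the right. *)
CoInductive par_bot_headed : T -> T -> Prop :=
| pbh_bot r t : ~ has_hnf bot r -> bot_headed t -> par_bot_headed r t
| pbh_var n : par_bot_headed (Var C n) (Var C n)
| pbh_con c : par_bot_headed (Con c) (Con c)
| pbh_app r1 r2 t1 t2 :
    par_bot_headed r1 t1 -> par_bot_headed r2 t2 -> par_bot_headed (App r1 r2) (App t1 t2)
| pbh_lam r t : par_bot_headed r t -> par_bot_headed (Lam r) (Lam t).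

Lemma par_bot_headed_ren : forall x y, par_bot_headed x y ->
  forall xi, par_bot_headed (ren xi x) (ren xi y).
Proof.
  cofix CIH. intros x y H xi; destruct H as [r t Hr Ht| | | |].
  - apply pbh_bot; [intros Hh; apply Hr; exact (has_hnf_ren_inv Hh) | apply bot_headed_ren, Ht].
  - rewrite !ren_var; apply pbh_var.
  - rewrite !ren_con; apply pbh_con.
  - rewrite !ren_app; apply pbh_app; apply CIH; assumption.
  - rewrite !ren_lam; apply pbh_lam; apply CIH; assumption.
Qed.

Lemma par_bot_headed_subst : forall x y, par_bot_headed x y -> forall sg tau,
  (forall n, par_bot_headed (sg n) (tau n)) -> par_bot_headed (subst sg x) (subst tau y).
Proof.
  cofix CIH. intros x y H sg tau Hs; destruct H as [r t Hr Ht| | | |].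
  - apply pbh_bot; [intros Hh; apply Hr; exact (has_hnf_subst_inv Hh) | apply bot_headed_subst, Ht].
  - rewrite !subst_var; apply Hs.
  - rewrite !subst_con; apply pbh_con.
  - rewrite !subst_app; apply pbh_app; apply CIH; assumption.
  - rewrite !subst_lam; apply pbh_lam; apply CIH; [assumption|].
    intros [|k]; simpl; [apply pbh_var | apply par_bot_headed_ren, Hs].
Qed.

Lemma par_bot_headed_no_hnf r r' t : ~ has_hnf bot r -> bot_headed t ->
  star (@beta_step C) r r' -> par_bot_headed r' t.
Proof. intros Hr Ht Hs. apply pbh_bot; [eapply no_hnf_star; eassumption | exact Ht]. Qed.

Lemma par_bot_headed_beta_step r r' : beta_step r r' -> forall t, par_bot_headed r t ->
  exists t', star (@beta_step C) t t' /\ par_bot_headed r' t'.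
Proof.
  intros Hs; induction Hs as [r0 r0' [a b]|r r' u Hs IH|r r' u Hs IH|r r' Hs IH]; intros t Ht;
    (* a step inside a subterm without hnf is absorbed: [t] does not move *)
    (inversion Ht as [? ? Hr Hb| | |? ? t1 t2 Ht1 Ht2|? t1 Ht1]; subst;
     [exists t; split; [constructor | eapply par_bot_headed_no_hnf; [eassumption.. |]];
      apply star_one; first [apply c_base; constructor | constructor; exact Hs] |]).
  - inversion Ht1 as [? ? Hr Hb| | | |? a' Ha]; subst.
    + exists (App t1 t2); split; [constructor|].
      apply pbh_bot; [|constructor; exact Hb].
      intros Hh. apply (no_hnf_lam Hr). exact (has_hnf_subst_inv Hh).
    + exists (subst0 a' t2); split; [apply star_one, c_base; constructor|].
      apply par_bot_headed_subst; [exact Ha|].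
      intros [|k]; [exact Ht2 | apply pbh_var].
  - destruct (IH _ Ht1) as [t1' [Hs' Ht']].
    exists (App t1' t2); split; [apply star_beta_appl, Hs' | apply pbh_app; assumption].
  - destruct (IH _ Ht2) as [t2' [Hs' Ht']].
    exists (App t1 t2'); split; [apply star_beta_appr, Hs' | apply pbh_app; assumption].
  - destruct (IH _ Ht1) as [t1' [Hs' Ht']].
    exists (Lam t1'); split; [apply star_beta_lam, Hs' | apply pbh_lam; assumption].
Qed.

Lemma par_bot_headed_star r r' : star (@beta_step C) r r' -> forall t, par_bot_headed r t ->
  exists t', star (@beta_step C) t t' /\ par_bot_headed r' t'.
Proof.
  induction 1 as [r|r r1 r' Hs _ IH]; intros t Ht.
  - exists t; split; [constructor | exact Ht].
  - destruct (par_bot_headed_beta_step Hs Ht) as [t1 [H1 H2]].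
    destruct (IH _ H2) as [t2 [H3 H4]].
    exists t2; split; [eapply star_trans; eassumption | exact H4].
Qed.

Lemma par_bot_headed_is_hnf h t : is_hnf bot h -> par_bot_headed h t -> is_hnf bot t.
Proof.
  intros Hh; revert t; induction Hh as [h Hb|h Hh1 IH]; intros t Ht.
  - constructor. revert t Ht; induction Hb as [n|c Hc|h1 h2 Hb IHb]; intros t Ht;
      inversion Ht as [? ? Hr| | |? ? t1 t2 Ht1|]; subst;
      try (exfalso; apply Hr, is_hnf_has_hnf; repeat constructor; assumption);
      constructor; auto.
  - inversion Ht as [? ? Hr| | | |? ? Ht1]; subst.
    + exfalso. apply Hr, is_hnf_has_hnf, hnf_lam. exact Hh1.
    + apply hnf_lam, IH, Ht1.
Qed.

Lemma par_bot_headed_has_hnf r t : par_bot_headed r t -> has_hnf bot r -> has_hnf bot t.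
Proof.
  intros Hrt [h [Hh Hhnf]].
  destruct (par_bot_headed_star Hh Hrt) as [t' [Ht' Hht']].
  exists t'; split; [exact Ht' | eapply par_bot_headed_is_hnf; eassumption].
Qed.

End BotHeaded.

Section Postponement.
Variable C : Type.
Variable bot : C.
Notation T := (term C).

Lemma par_bot_refl : forall t : T, par_bot bot t t.
Proof.
  cofix CIH. intros [n|c|a b|a]; constructor; apply CIH.
Qed.

(* [R_bot] excludes the trivial pair [(bot, bot)], which [pb_con] covers. *)
Lemma par_bot_no_hnf r : ~ has_hnf bot r -> par_bot bot r (Con bot).
Proof.
  intros Hr. destruct (classic (r = Con bot)) as [->|Hne].
  - apply pb_con.
  - apply pb_bot. repeat split; assumption.
Qed.

Lemma par_bot_par_bot_headed : forall r t, par_bot bot r t -> par_bot_headed bot r t.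
Proof.
  cofix CIH. intros r t H; destruct H as [r t [-> [Hr _]]| | | |].
  - apply pbh_bot; [exact Hr | constructor].
  - apply pbh_var.
  - apply pbh_con.
  - apply pbh_app; apply CIH; assumption.
  - apply pbh_lam; apply CIH; assumption.
Qed.

Lemma par_bot_ren : forall x y, par_bot bot x y -> forall xi, par_bot bot (ren xi x) (ren xi y).
Proof.
  cofix CIH. intros x y H xi; destruct H as [r t [-> [Hr _]]| | | |].
  - rewrite ren_con. apply par_bot_no_hnf. intros Hh; apply Hr, (has_hnf_ren_inv Hh).
  - rewrite !ren_var; apply pb_var.
  - rewrite !ren_con; apply pb_con.
  - rewrite !ren_app; apply pb_app; apply CIH; assumption.
  - rewrite !ren_lam; apply pb_lam; apply CIH; assumption.
Qed.

Lemma par_bot_subst : forall x y, par_bot bot x y -> forall sg tau,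
  (forall n, par_bot bot (sg n) (tau n)) -> par_bot bot (subst sg x) (subst tau y).
Proof.
  cofix CIH. intros x y H sg tau Hs; destruct H as [r t [-> [Hr _]]| | | |].
  - rewrite subst_con. apply par_bot_no_hnf. intros Hh; apply Hr, (has_hnf_subst_inv Hh).
  - rewrite !subst_var; apply Hs.
  - rewrite !subst_con; apply pb_con.
  - rewrite !subst_app; apply pb_app; apply CIH; assumption.
  - rewrite !subst_lam; apply pb_lam; apply CIH; [assumption|].
    intros [|k]; simpl; [apply pb_var | apply par_bot_ren, Hs].
Qed.

Lemma par_bot_app_inv r t1 t2 : par_bot bot r (App t1 t2) ->
  exists r1 r2, r = App r1 r2 /\ par_bot bot r1 t1 /\ par_bot bot r2 t2.
Proof.
  intros H; inversion H as [? ? [He _]| | |r1 r2 ? ? H1 H2|]; subst.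
  - discriminate He.
  - exists r1, r2; auto.
Qed.

Lemma par_bot_lam_inv r t1 : par_bot bot r (Lam t1) ->
  exists r1, r = Lam r1 /\ par_bot bot r1 t1.
Proof.
  intros H; inversion H as [? ? [He _]| | | |r1 ? H1]; subst.
  - discriminate He.
  - exists r1; auto.
Qed.

Lemma par_bot_postpone_step t u : beta_bot_step bot t u -> forall r, par_bot bot r t ->
  exists r', star (@beta_step C) r r' /\ par_bot bot r' u.
Proof.
  induction 1 as [t u [[a b]|[-> [Ht _]]]|t t' u _ IH|t t' u _ IH|t t' _ IH]; intros r Hr.
  - destruct (par_bot_app_inv Hr) as [r1 [r2 [-> [H1 H2]]]].
    destruct (par_bot_lam_inv H1) as [a' [-> Ha]].
    exists (subst0 a' r2); split; [apply star_one, c_base; constructor|].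
    apply par_bot_subst; [exact Ha|]. intros [|k]; [exact H2 | apply pb_var].
  - exists r; split; [constructor|]. apply par_bot_no_hnf.
    intros Hh. apply Ht. exact (par_bot_headed_has_hnf (par_bot_par_bot_headed Hr) Hh).
  - destruct (par_bot_app_inv Hr) as [r1 [r2 [-> [H1 H2]]]].
    destruct (IH _ H1) as [r1' [Hs H1']].
    exists (App r1' r2); split; [apply star_beta_appl, Hs | apply pb_app; assumption].
  - destruct (par_bot_app_inv Hr) as [r1 [r2 [-> [H1 H2]]]].
    destruct (IH _ H2) as [r2' [Hs H2']].
    exists (App r1 r2'); split; [apply star_beta_appr, Hs | apply pb_app; assumption].
  - destruct (par_bot_lam_inv Hr) as [r1 [-> H1]].
    destruct (IH _ H1) as [r1' [Hs H1']].
    exists (Lam r1'); split; [apply star_beta_lam, Hs | apply pb_lam; assumption].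
Qed.

Lemma par_bot_postpone_star t u : star (beta_bot_step bot) t u -> forall r, par_bot bot r t ->
  exists r', star (@beta_step C) r r' /\ par_bot bot r' u.
Proof.
  induction 1 as [t|t t1 u Hs _ IH]; intros r Hr.
  - exists r; split; [constructor | exact Hr].
  - destruct (par_bot_postpone_step Hs Hr) as [r1 [H1 H2]].
    destruct (IH _ H2) as [r2 [H3 H4]].
    exists r2; split; [eapply star_trans; eassumption | exact H4].
Qed.

Definition postponable (s t : T) : Prop :=
  exists t0, par_bot bot s t0 /\ inf (beta_bot_step bot) t0 t.

Definition choose_atom (s t : T) : T :=
  epsilon (inhabits s) (fun r => star (@beta_step C) s r /\ par_bot bot r t).

Definition choose_app (s t1 t2 : T) : T * T :=
  epsilon (inhabits (s, s)) (fun p => star (@beta_step C) s (App (fst p) (snd p)) /\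
    postponable (fst p) t1 /\ postponable (snd p) t2).

Definition choose_lam (s t1 : T) : T :=
  epsilon (inhabits s) (fun r1 => star (@beta_step C) s (Lam r1) /\ postponable r1 t1).

Lemma choose_atom_spec s t : postponable s t ->
  (forall a b, t <> App a b) -> (forall a, t <> Lam a) ->
  star (@beta_step C) s (choose_atom s t) /\ par_bot bot (choose_atom s t) t.
Proof.
  intros [t0 [Hs Ht]] Happ Hlam. unfold choose_atom. apply epsilon_spec.
  destruct Ht as [t0 n Ht|t0 c Ht|t0 ? ? a b|t0 ? a];
    [ | | exfalso; eapply Happ; reflexivity | exfalso; eapply Hlam; reflexivity ];
    exact (par_bot_postpone_star Ht Hs).
Qed.

Lemma choose_app_spec s t1 t2 : postponable s (App t1 t2) ->
  let p := choose_app s t1 t2 in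
  star (@beta_step C) s (App (fst p) (snd p)) /\ postponable (fst p) t1 /\ postponable (snd p) t2.
Proof.
  intros [t0 [Hs Ht]]. cbv zeta. pattern (choose_app s t1 t2). apply epsilon_spec.
  inversion Ht as [| |? u1 u2 ? ? Hu Ht1 Ht2|]; subst.
  destruct (par_bot_postpone_star Hu Hs) as [r [Hr Hpb]].
  destruct (par_bot_app_inv Hpb) as [r1 [r2 [-> [H1 H2]]]].
  exists (r1, r2); repeat split; [exact Hr | exists u1 | exists u2]; auto.
Qed.

Lemma choose_lam_spec s t1 : postponable s (Lam t1) ->
  star (@beta_step C) s (Lam (choose_lam s t1)) /\ postponable (choose_lam s t1) t1.
Proof.
  intros [t0 [Hs Ht]]. unfold choose_lam. apply epsilon_spec.
  inversion Ht as [| | |? u1 ? Hu Ht1]; subst.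
  destruct (par_bot_postpone_star Hu Hs) as [r [Hr Hpb]].
  destruct (par_bot_lam_inv Hpb) as [r1 [-> H1]].
  exists r1; split; [exact Hr | exists u1; auto].
Qed.

CoFixpoint postpone (s t : T) : T :=
  match t with
  | App t1 t2 =>
      let p := choose_app s t1 t2 in App (postpone (fst p) t1) (postpone (snd p) t2)
  | Lam t1 => Lam (postpone (choose_lam s t1) t1)
  | _ => choose_atom s t
  end.

Lemma postpone_unfold s t : postpone s t =
  match t with
  | App t1 t2 =>
      let p := choose_app s t1 t2 in App (postpone (fst p) t1) (postpone (snd p) t2)
  | Lam t1 => Lam (postpone (choose_lam s t1) t1)
  | _ => choose_atom s t
  end.
Proof.
  rewrite (term_frob_eq (postpone s t)).
  destruct t; simpl; try reflexivity; symmetry; apply term_frob_eq.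
Qed.

Lemma postpone_inf : forall s t, postponable s t -> inf (@beta_step C) s (postpone s t).
Proof.
  cofix CIH. intros s t Hp. rewrite postpone_unfold.
  destruct t as [n|c|t1 t2|t1].
  1, 2: destruct (choose_atom_spec Hp ltac:(discriminate) ltac:(discriminate)) as [Hs _];
    eapply inf_star_l; [exact Hs | apply inf_refl].
  - destruct (choose_app_spec Hp) as [Hs [H1 H2]].
    eapply inf_app; [exact Hs | apply CIH, H1 | apply CIH, H2].
  - destruct (choose_lam_spec Hp) as [Hs H1].
    eapply inf_lam; [exact Hs | apply CIH, H1].
Qed.

Lemma postpone_par_bot : forall s t, postponable s t -> par_bot bot (postpone s t) t.
Proof.
  cofix CIH. intros s t Hp. rewrite postpone_unfold.
  destruct t as [n|c|t1 t2|t1].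
  1, 2: exact (proj2 (choose_atom_spec Hp ltac:(discriminate) ltac:(discriminate))).
  - destruct (choose_app_spec Hp) as [_ [H1 H2]]. apply pb_app; apply CIH; assumption.
  - destruct (choose_lam_spec Hp) as [_ H1]. apply pb_lam, CIH, H1.
Qed.

End Postponement.

Theorem theorem5p30 (C : Type) (bot : C) (s t : term C) :
  inf (beta_bot_step bot) s t ->
  exists r : term C, inf (@beta_step C) s r /\ par_bot bot r t.
Proof.
  intros Hst.
  assert (Hp : postponable bot s t) by (exists s; split; [apply par_bot_refl | exact Hst]).
  exists (postpone bot s t); split; [apply postpone_inf | apply postpone_par_bot]; exact Hp.
Qed.
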